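(* Let $G$ be a commutative group, $H$ a torsion-free subgroup, $G'=G/H$ and $\varphi:G\to G'$ the natural homomorphism. Let $U\subset G$ be finite and let $\vartheta$ be any of the functionals $\alpha,\alpha',\alpha'',\beta_p$ ($1<p<\infty$), $\beta',\beta''$, where $\vartheta(U)$ is computed in $G$ and $\vartheta(C_\varphi(U))$ is computed in $G'\times\mathbb{Z}$. Then $\vartheta(C_\varphi(U))\le\vartheta(U)$.
   Context: The compression along $\varphi$ maps a finite $A\subset G$ to the finite set $C_\varphi(A)=\bigcup_{x\in\varphi(A)}\{x\}\times\{0,1,\dots,|A\cap\varphi^{-1}(x)|-1\}\subset G'\times\mathbb{Z}$. For a finite set $U$ in a commutative group $K$, with $A,B$ ranging over nonempty finite subsets of $K$: $\alpha(U)=\inf_{A\supset U,B\supset U}\frac{|A+B|}{\sqrt{|A||B|}}$; $\alpha'(U)=\inf_{A\supset U,B\supset U,|A|=|B|}\frac{|A+B|}{|A|}$; $\alpha''(U)=\inf_{A\supset U}\frac{|A+A|}{|A|}$; $\beta_p(U)=\inf_{A,B}\frac{|A+B+U|}{|A|^{1/p}|B|^{1-1/p}}$; $\beta'(U)=\inf_{A,B,|A|=|B|}\frac{|A+B+U|}{\sqrt{|A||B|}}$; $\beta''(U)=\inf_{A}\frac{|A+A+U|}{|A|}$. *)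

From HB Require Import structures.
From mathcomp Require Import all_boot all_order all_algebra finmap.
From mathcomp Require Import classical_sets reals exp.
Set Implicit Arguments. Unset Strict Implicit. Unset Printing Implicit Defensive.
Import Order.TTheory GRing.Theory Num.Theory.

Local Open Scope fset_scope.
Local Open Scope ring_scope.

Section Defs.
Variable R : realType.

Definition sumset (K : zmodType) (A B : {fset K}) : {fset K} :=
  [fset a + b | a in A, b in B].

Definition compress (G G' : zmodType) (phi : G -> G') (A : {fset G})
  : {fset G' * int} :=
  \bigcup_(x <- phi @` A)
     [fset ((x, (k%:Z)) : G' * int) | k in iota 0 #|` [fset a in A | phi a == x]|].

Definition card_R (K : choiceType) (A : {fset K}) : R := (#|` A|)%:R.

Definition alpha (K : zmodType) (U : {fset K}) : R :=
  inf [set r : R | exists (A B : {fset K}),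
        [/\ A != fset0, B != fset0, fsubset U A, fsubset U B &
            r = card_R (sumset A B) / Num.sqrt (card_R A * card_R B)]].

Definition alpha' (K : zmodType) (U : {fset K}) : R :=
  inf [set r : R | exists (A B : {fset K}),
        [/\ A != fset0, B != fset0, fsubset U A, fsubset U B &
            #|` A| = #|` B| /\ r = card_R (sumset A B) / card_R A]].

Definition alpha'' (K : zmodType) (U : {fset K}) : R :=
  inf [set r : R | exists (A : {fset K}),
        [/\ A != fset0, fsubset U A &
            r = card_R (sumset A A) / card_R A]].

Definition beta_p (p : R) (K : zmodType) (U : {fset K}) : R :=
  inf [set r : R | exists (A B : {fset K}),
        [/\ A != fset0, B != fset0 &
            r = card_R (sumset (sumset A B) U) /
                (card_R A `^ (p^-1) * card_R B `^ (1 - p^-1))]].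

Definition beta' (K : zmodType) (U : {fset K}) : R :=
  inf [set r : R | exists (A B : {fset K}),
        [/\ A != fset0, B != fset0, #|` A| = #|` B| &
            r = card_R (sumset (sumset A B) U) / Num.sqrt (card_R A * card_R B)]].

Definition beta'' (K : zmodType) (U : {fset K}) : R :=
  inf [set r : R | exists (A : {fset K}),
        A != fset0 /\ r = card_R (sumset (sumset A A) U) / card_R A].

End Defs.

(* Compression maps sumsets into sumsets: the columns of C(A) over x and of
   C(B) over y, of heights |A_x| and |B_y| (A_x the fibre of A over x), add up
   to a column of height |A_x| + |B_y| - 1 over x + y, while the column of
   C(A + B) over x + y has height |(A + B)_(x+y)| >= |A_x + B_y|.  Hence it
   suffices that |X + Y| >= |X| + |Y| - 1 when all differences of elements of
   Y are torsion-free, which follows by induction on |Y| using Dyson's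
   e-transform.  As compression also preserves cardinality and inclusion,
   each pair (A, B) competing in the infimum defining a functional at U gives
   the competitor (C(A), C(B)) at C(U), with the same denominator and a
   numerator no larger. *)
From HB Require Import structures.
From mathcomp Require Import all_boot all_order all_algebra finmap.
From mathcomp Require Import classical_sets reals exp.
From mathcomp Require Import zify.
Import Order.TTheory GRing.Theory Num.Theory.
Set Implicit Arguments. Unset Strict Implicit. Unset Printing Implicit Defensive.
Local Open Scope fset_scope.
Local Open Scope ring_scope.

Section Sumset.
Variable K : zmodType.
Implicit Types (A B X Y : {fset K}) (d e : K).

Lemma mem_sumset A B a b : a \in A -> b \in B -> a + b \in sumset A B.
Proof. by move=> aA bB; apply: (@in_imfset2 _ _ _ (fun _ => K)). Qed.

Lemma sumsetP A B z :
  reflect (exists a b, [/\ a \in A, b \in B & z = a + b]) (z \in sumset A B).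
Proof.
apply: (iffP (imfset2P _ _ _ _ _)) => [[a aA [b bB ->]]|[a [b [aA bB ->]]]].
  by exists a, b.
by exists a => //; exists b.
Qed.

Lemma sumsetS A A' B B' :
  A `<=` A' -> B `<=` B' -> sumset A B `<=` sumset A' B'.
Proof.
move=> /fsubsetP sA /fsubsetP sB; apply/fsubsetP => _ /sumsetP[a [b [aA bB ->]]].
by apply: mem_sumset; [apply: sA | apply: sB].
Qed.

Lemma card_translate X e : #|` [fset z + e | z in X]| = #|` X|.
Proof. by rewrite card_imfset //= => u v /addIr. Qed.

Lemma translate_fsubset_sumset X Y y :
  y \in Y -> [fset z + y | z in X] `<=` sumset X Y.
Proof.
by move=> yY; apply/fsubsetP => _ /imfsetP[z /= zX ->]; apply: mem_sumset.
Qed.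

Lemma card_sumset_ge_l X Y : Y != fset0 -> (#|` X| <= #|` sumset X Y|)%N.
Proof.
case/fset0Pn=> y yY; rewrite -(card_translate X y).
by rewrite fsubset_leq_card // translate_fsubset_sumset.
Qed.

(* Summing over X = X + d shows that |X| d = 0. *)
Lemma translate_fsubset_mulrn X d :
  [fset z + d | z in X] `<=` X -> d *+ #|` X| = 0.
Proof.
move=> sub; have eqX : [fset z + d | z in X] = X.
  by apply/eqP; rewrite eqEfcard sub card_translate leqnn.
have : \sum_(z <- X) z = \sum_(z <- X) z + d *+ #|` X|.
  rewrite -{1}eqX big_imfset /=; last by move=> u v _ _ /addIr.
  by rewrite big_split /= big_const_seq count_predT iter_addr_0.
by move/(congr1 (fun t => t - \sum_(z <- X) z)); rewrite subrr addrC addKr.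
Qed.

Definition torsionfree_diff Y :=
  {in Y &, forall y y' (n : nat), (y - y') *+ n.+1 = 0 -> y = y'}.

Lemma torsionfree_diffS Y Y' :
  Y' `<=` Y -> torsionfree_diff Y -> torsionfree_diff Y'.
Proof. by move=> /fsubsetP sY tfY y y' /sY yY /sY y'Y; apply: tfY. Qed.

(* Dyson's e-transform: X(e) = X `|` (Y + e), Y(e) = Y `&` (X - e). *)
Lemma e_transform X Y x y :
  x \in X -> y \in Y -> ~~ ([fset z + (x - y) | z in Y] `<=` X) ->
  exists X' Y', [/\ X' != fset0, Y' != fset0, Y' `<` Y,
    (#|` X'| + #|` Y'| = #|` X| + #|` Y|)%N & sumset X' Y' `<=` sumset X Y].
Proof.
set e := x - y => xX yY /fsubsetPn[_ /imfsetP[w /= wY ->] wX].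
pose Ye := [fset z + e | z in Y]; pose Y' := [fset z in Y | z + e \in X].
exists (X `|` Ye), Y'; split.
- by apply/fset0Pn; exists x; rewrite in_fsetU xX.
- by apply/fset0Pn; exists y; rewrite !inE yY /e addrC subrK.
- apply: fsub_proper_trans (fproperD1 wY); apply/fsubsetP => z.
  rewrite !inE => /andP[zY zX]; rewrite zY andbT.
  by apply: contraNneq wX => <-.
- have XYe : X `&` Ye = [fset z + e | z in Y'].
    apply/fsetP => v; apply/idP/idP.
      rewrite in_fsetI => /andP[vX /imfsetP[z /= zY ev]]; rewrite ev in vX *.
      by apply/imfsetP; exists z => //=; rewrite !inE zY vX.
    case/imfsetP => z /=; rewrite !inE => /andP[zY zX] ->.
    by rewrite zX /=; apply/imfsetP; exists z.
  have := fsubset_leq_card (fsubsetIr X Ye).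
  rewrite cardfsU XYe !card_translate => le_Y'Y.
  by rewrite subnK // (leq_trans le_Y'Y (leq_addl _ _)).
- apply/fsubsetP => _ /sumsetP[a [b [aXYe + ->]]]; rewrite !inE => /andP[bY bX].
  case/fsetUP: aXYe => [aX|/imfsetP[c /= cY ->]]; first exact: mem_sumset.
  by rewrite -addrA [e + b]addrC addrC; apply: mem_sumset.
Qed.

Lemma card_sumset_ge X Y : X != fset0 -> Y != fset0 -> torsionfree_diff Y ->
  (#|` X| + #|` Y| <= (#|` sumset X Y|).+1)%N.
Proof.
move: {2}#|` Y| (leqnn #|` Y|) => n; elim: n X Y => [|n IH] X Y.
  by rewrite leqn0 cardfs_eq0 => /eqP-> _ /eqP.
move=> leYn X0 Y0 tfY; have [Y1|Y2] := leqP #|` Y| 1.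
  by rewrite -addn1 leq_add // card_sumset_ge_l.
have /fset0Pn[y0 y0Y] := Y0.
have : (0 < #|` Y `\ y0|)%N by move: Y2; rewrite (cardfsD1 y0) y0Y.
rewrite cardfs_gt0 => /fset0Pn[y1]; rewrite in_fsetD1 => /andP[y10 y1Y].
have {}y10 : y1 - y0 != 0 by rewrite subr_eq0.
have : ~~ ([fset z + (y1 - y0) | z in X] `<=` X).
  apply: contra y10 => /translate_fsubset_mulrn.
  move: X0; rewrite -cardfs_gt0; case: #|` X| => // m _ /(tfY _ _ y1Y y0Y) ->.
  by rewrite subrr.
case/fsubsetPn=> _ /imfsetP[x /= xX ->] xdX.
have : ~~ ([fset z + (x - y0) | z in Y] `<=` X).
  apply/fsubsetPn; exists (x + (y1 - y0)) => //.
  by apply/imfsetP; exists y1 => //=; rewrite addrCA.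
case/(e_transform xX y0Y) => X' [Y' [X'0 Y'0 ltY' cardX'Y' sS]].
rewrite -cardX'Y'; apply: leq_trans (IH X' Y' _ X'0 Y'0 _) _.
- by rewrite -ltnS (leq_trans (fproper_ltn_card ltY') leYn).
- exact: torsionfree_diffS (fproper_sub ltY') tfY.
- by rewrite ltnS fsubset_leq_card.
Qed.

End Sumset.

Section Compression.
Variables (G G' : zmodType) (phi : G -> G').
Implicit Types (A B : {fset G}) (x : G').

Definition fiber A x := [fset a in A | phi a == x].

Lemma in_compress A x (k : int) :
  ((x, k) \in compress phi A) = (0 <= k) && (absz k < #|` fiber A x|)%N.
Proof.
apply/bigfcupP/idP.
  case=> i /andP[iA _] /imfsetP[k' /= + [-> ->]].
  by rewrite mem_iota add0n /= => ->.
case/andP; case: k => // n _ /= lt.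
case: (fset_0Vmem (fiber A x)) lt => [->|[a]]; first by rewrite cardfs0.
rewrite !inE /= => /andP[aA /eqP pa] lt.
exists x; first by rewrite andbT; apply/imfsetP; exists a.
by apply/imfsetP; exists n => //=; rewrite mem_iota add0n.
Qed.

Lemma card_fiber1U A a x : a \notin A ->
  #|` fiber (a |` A) x| = ((phi a == x) + #|` fiber A x|)%N.
Proof.
move=> aA; have [pa|pa] := eqVneq (phi a) x.
  have -> : fiber (a |` A) x = a |` fiber A x.
    by apply/fsetP => z; rewrite !inE; case: eqVneq => // ->; rewrite pa eqxx.
  by rewrite cardfsU1 !inE (negPf aA).
rewrite add0n; congr #|` _|; apply/fsetP => z; rewrite !inE.
by case: eqVneq => // ->; rewrite (negPf aA) (negPf pa).
Qed.

Lemma compress1U A a : a \notin A ->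
  compress phi (a |` A) = (phi a, (#|` fiber A (phi a)|)%:Z) |` compress phi A.
Proof.
move=> aA; apply/fsetP => -[x k]; rewrite in_fset1U !in_compress card_fiber1U //.
rewrite xpair_eqE; case: (phi a =P x) => [<-|pa] /=; last first.
  by rewrite add0n; case: eqP => // e; case: pa.
by rewrite eqxx /=; case: k => [n|n] //=; rewrite add1n ltnS leq_eqVlt.
Qed.

Lemma card_compress A : #|` compress phi A| = #|` A|.
Proof.
elim/fset1U_rect: A => [|a A aA IH].
  apply/eqP; rewrite cardfs0 cardfs_eq0; apply/eqP/fsetP => -[x k].
  rewrite in_compress inE; apply/negbTE; rewrite negb_and.
  suff -> : fiber fset0 x = fset0 by rewrite cardfs0 orbT.
  by apply/fsetP => z; rewrite !inE.
rewrite compress1U // !cardfsU1 IH aA; congr (_ + _)%N.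
by rewrite in_compress /= ltnn.
Qed.

Lemma compress_eq0 A : (compress phi A == fset0) = (A == fset0).
Proof. by rewrite -!cardfs_eq0 card_compress. Qed.

Lemma compressS A B : A `<=` B -> compress phi A `<=` compress phi B.
Proof.
move=> /fsubsetP sAB; apply/fsubsetP => -[x k]; rewrite !in_compress.
case/andP => -> lt; apply: leq_trans lt _; apply: fsubset_leq_card.
by apply/fsubsetP => z; rewrite !inE => /andP[/sAB -> ->].
Qed.

End Compression.

Section RealCounting.
Variable R : realType.

Lemma inf_le_inf (S T : set R) :
  (exists t, T t) -> (forall t, T t -> exists2 s, S s & s <= t) ->
  (forall s, S s -> 0 <= s) -> inf S <= inf T.
Proof.
move=> T0 TS S_ge0; apply: lb_le_inf => // t /TS[s Ss le_st].
by apply: le_trans le_st; apply: ge_inf => //; exists 0 => u /S_ge0.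
Qed.

Lemma card_R_ge0 (K : choiceType) (A : {fset K}) : 0 <= card_R R A.
Proof. exact: ler0n. Qed.

Lemma ler_card_R_div (K K' : choiceType) (A : {fset K}) (B : {fset K'}) (d : R) :
  (#|` A| <= #|` B|)%N -> 0 <= d -> card_R R A / d <= card_R R B / d.
Proof. by move=> le_AB d_ge0; rewrite ler_wpM2r ?invr_ge0 ?ler_nat. Qed.

Lemma card_R_compress (G G' : zmodType) (phi : G -> G') (A : {fset G}) :
  card_R R (compress phi A) = card_R R A.
Proof. by rewrite /card_R card_compress. Qed.

End RealCounting.

Section CompressionSumset.
Variables (G G' : zmodType) (phi : {additive G -> G'}).
Hypothesis ker_torsion_free :
  forall (x : G) (n : nat), phi x = 0 -> x *+ n.+1 = 0 -> x = 0.
Implicit Types A B : {fset G}.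

Lemma fiber_torsionfree_diff B y : torsionfree_diff (fiber phi B y).
Proof.
move=> u v; rewrite !inE => /andP[_ /eqP pu] /andP[_ /eqP pv] n.
move/(ker_torsion_free _); rewrite raddfB pu pv subrr => /(_ erefl)/eqP.
by rewrite subr_eq0 => /eqP.
Qed.

Lemma sumset_fiber A B x y :
  sumset (fiber phi A x) (fiber phi B y) `<=` fiber phi (sumset A B) (x + y).
Proof.
apply/fsubsetP => _ /sumsetP[a [b [+ + ->]]]; rewrite !inE.
by move=> /andP[aA /eqP <-] /andP[bB /eqP <-]; rewrite mem_sumset //= raddfD.
Qed.

Lemma compress_sumset A B :
  sumset (compress phi A) (compress phi B) `<=` compress phi (sumset A B).
Proof.
apply/fsubsetP => _ /sumsetP[[x i] [[y j] [+ + ->]]]; rewrite !in_compress.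
case: i => // i; case: j => // j /= ltiA ltjB.
have A0 : fiber phi A x != fset0 by rewrite -cardfs_gt0 (leq_ltn_trans _ ltiA).
have B0 : fiber phi B y != fset0 by rewrite -cardfs_gt0 (leq_ltn_trans _ ltjB).
move: ltiA ltjB; have := card_sumset_ge A0 B0 (@fiber_torsionfree_diff B y).
have := fsubset_leq_card (sumset_fiber A B x y).
set a := #|` fiber _ A x|; set b := #|` fiber _ B y|.
set c := #|` sumset _ _|; set d := #|` fiber _ _ _|.
lia.
Qed.

Lemma card_sumset_compress A B :
  (#|` sumset (compress phi A) (compress phi B)| <= #|` sumset A B|)%N.
Proof.
by rewrite -(card_compress phi (sumset A B)) fsubset_leq_card // compress_sumset.
Qed.

Lemma card_sumset3_compress A B C :
  (#|` sumset (sumset (compress phi A) (compress phi B)) (compress phi C)|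
     <= #|` sumset (sumset A B) C|)%N.
Proof.
apply: leq_trans (card_sumset_compress (sumset A B) C).
by apply/fsubset_leq_card/sumsetS => //; apply: compress_sumset.
Qed.

Variables (R : realType) (U : {fset G}).

Let U0 := U `|` [fset 0].

Let U0_neq0 : U0 != fset0.
Proof. by apply/fset0Pn; exists 0; rewrite in_fsetU in_fset1 eqxx orbT. Qed.

Let U_sub_U0 : U `<=` U0. Proof. exact: fsubsetUl. Qed.

Let Z0_neq0 : [fset 0 : G] != fset0.
Proof. by apply/fset0Pn; exists 0; rewrite in_fset1. Qed.

Local Hint Resolve U_sub_U0 U0_neq0 Z0_neq0 : core.

Lemma alpha_compress : alpha R (compress phi U) <= alpha R U.
Proof.
apply: inf_le_inf => [|_ [A [B [A0 B0 UA UB ->]]]|_ [A [B [_ _ _ _ ->]]]].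
- by eexists; exists U0, U0; split.
- eexists; first by exists (compress phi A), (compress phi B);
    split; rewrite ?compress_eq0 ?compressS.
  rewrite !card_R_compress.
  by apply: ler_card_R_div; rewrite ?sqrtr_ge0 ?card_sumset_compress.
- by rewrite divr_ge0 ?card_R_ge0 ?sqrtr_ge0.
Qed.

Lemma alpha'_compress : alpha' R (compress phi U) <= alpha' R U.
Proof.
apply: inf_le_inf
  => [|_ [A [B [A0 B0 UA UB [eqAB ->]]]]|_ [A [B [_ _ _ _ [_ ->]]]]].
- by eexists; exists U0, U0; split.
- eexists; first by exists (compress phi A), (compress phi B);
    split; rewrite ?compress_eq0 ?compressS ?card_compress.
  rewrite !card_R_compress.
  by apply: ler_card_R_div; rewrite ?card_R_ge0 ?card_sumset_compress.
- by rewrite divr_ge0 ?card_R_ge0.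
Qed.

Lemma alpha''_compress : alpha'' R (compress phi U) <= alpha'' R U.
Proof.
apply: inf_le_inf => [|_ [A [A0 UA ->]]|_ [A [_ _ ->]]].
- by eexists; exists U0; split.
- eexists; first by exists (compress phi A); split; rewrite ?compress_eq0 ?compressS.
  rewrite !card_R_compress.
  by apply: ler_card_R_div; rewrite ?card_R_ge0 ?card_sumset_compress.
- by rewrite divr_ge0 ?card_R_ge0.
Qed.

Lemma beta_p_compress (p : R) : beta_p p (compress phi U) <= beta_p p U.
Proof.
apply: inf_le_inf => [|_ [A [B [A0 B0 ->]]]|_ [A [B [_ _ ->]]]].
- by eexists; exists [fset 0], [fset 0]; split.
- eexists; first by exists (compress phi A), (compress phi B); rewrite !compress_eq0.
  rewrite !card_R_compress.
  by apply: ler_card_R_div; rewrite ?mulr_ge0 ?powR_ge0 ?card_sumset3_compress.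
- by rewrite divr_ge0 ?card_R_ge0 ?mulr_ge0 ?powR_ge0.
Qed.

Lemma beta'_compress : beta' R (compress phi U) <= beta' R U.
Proof.
apply: inf_le_inf => [|_ [A [B [A0 B0 eqAB ->]]]|_ [A [B [_ _ _ ->]]]].
- by eexists; exists [fset 0], [fset 0]; split.
- eexists; first by exists (compress phi A), (compress phi B);
    rewrite !compress_eq0 !card_compress.
  rewrite !card_R_compress.
  by apply: ler_card_R_div; rewrite ?sqrtr_ge0 ?card_sumset3_compress.
- by rewrite divr_ge0 ?card_R_ge0 ?sqrtr_ge0.
Qed.

Lemma beta''_compress : beta'' R (compress phi U) <= beta'' R U.
Proof.
apply: inf_le_inf => [|_ [A [A0 ->]]|_ [A [_ ->]]].
- by eexists; exists [fset 0].
- eexists; first by exists (compress phi A); rewrite compress_eq0.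
  rewrite !card_R_compress.
  by apply: ler_card_R_div; rewrite ?card_R_ge0 ?card_sumset3_compress.
- by rewrite divr_ge0 ?card_R_ge0.
Qed.

End CompressionSumset.

Theorem mainTheorem6 (R : realType) (G G' : zmodType) (phi : {additive G -> G'})
  (phi_surj : forall y : G', exists x : G, phi x = y)
  (ker_torsion_free : forall (x : G) (n : nat), phi x = 0 -> x *+ n.+1 = 0 -> x = 0)
  (U : {fset G}) :
  let CU := compress phi U in
  alpha R CU <= alpha R U /\
  alpha' R CU <= alpha' R U /\
  alpha'' R CU <= alpha'' R U /\
  (forall p : R, 1 < p -> beta_p p CU <= beta_p p U) /\
  beta' R CU <= beta' R U /\
  beta'' R CU <= beta'' R U.
Proof.
move=> CU; split; first exact: (alpha_compress ker_torsion_free).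
split; first exact: (alpha'_compress ker_torsion_free).
split; first exact: (alpha''_compress ker_torsion_free).
split; first by move=> p _; apply: (beta_p_compress ker_torsion_free).
split; first exact: (beta'_compress ker_torsion_free).
exact: (beta''_compress ker_torsion_free).
Qed.
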